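(* Let $K$ be a differential field of characteristic $0$ and let $M$ be a differential module over $K$ of dimension $3$ with $\det M=\mathbf{1}$. Suppose that there exists $F\in \mathrm{sym}^2M$ with $\partial F=0$ such that $F$ is non degenerate and has a non trivial isotropic vector. Then there exists a differential module $N$ over $K$ of dimension $2$ with $\det N=\mathbf{1}$ and $\mathrm{sym}^2N\cong M$.
   Context: A differential module over $K$ is a finite-dimensional $K$-vector space with an additive map $\partial$ satisfying $\partial(fm)=f'm+f\partial m$; $\mathrm{sym}^2M$, $\Lambda^kM$ carry the induced derivations, $\det M=\Lambda^{\dim M}M$, and $\mathbf{1}$ is the trivial module $K$ with $\partial=$ the derivation of $K$. An element $F\in\mathrm{sym}^2M$ defines a symmetric bilinear form $(a,b)=F(a\otimes b)$ on the dual $M^*$; $F$ is non degenerate if this form is, and an isotropic vector is a nonzero $a\in M^*$ with $(a,a)=0$. *)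

From HB Require Import structures.
From mathcomp Require Import all_boot all_order all_algebra.
Set Implicit Arguments. Unset Strict Implicit. Unset Printing Implicit Defensive.
Import GRing.Theory.
Local Open Scope ring_scope.

Definition derivation (K : fieldType) (d : K -> K) : Prop :=
  (forall x y : K, d (x + y) = d x + d y) /\
  (forall x y : K, d (x * y) = d x * y + x * d y).

(* A differential module of dimension n over (K,d) with a chosen basis
   e_0..e_{n-1}: underlying space 'cV_n (coordinates), and
   d(e_j) = sum_i A i j e_i, i.e.  partial v = map_mx d v + A *m v.
   Every differential module of dimension n is of this form. *)

(* Isomorphism of differential modules given by matrices A, B:
   an invertible K-linear map v |-> P v commuting with partial, i.e.
   map_mx d P + B *m P = P *m A. *)
Definition dmod_iso (K : fieldType) (d : K -> K) (n : nat) (A B : 'M[K]_n) : Prop :=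
  exists P : 'M[K]_n, P \in unitmx /\ map_mx d P = P *m A - B *m P.

(* The trivial module 1 = K with partial = d : the 1x1 zero matrix. *)
Definition trivmx (K : fieldType) : 'M[K]_1 := 0.

(* det M = Lambda^n M, with basis e_0 /\ ... /\ e_{n-1};
   partial(e_0/\.../\e_{n-1}) = (tr A) e_0/\.../\e_{n-1}. *)
Definition detmx (K : fieldType) (n : nat) (A : 'M[K]_n) : 'M[K]_1 := (\tr A)%:M.

(* sym^2 N for a 2-dimensional N with matrix A, in the basis
   f_0 = e_0^2, f_1 = e_0 e_1, f_2 = e_1^2:
   d f_0 = 2a f_0 + 2c f_1, d f_1 = b f_0 + (a+d') f_1 + c f_2,
   d f_2 = 2b f_1 + 2d' f_2, where a = A00, b = A01, c = A10, d' = A11. *)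
Definition sym2mx (K : fieldType) (A : 'M[K]_2) : 'M[K]_3 :=
  let a := A 0 0 in let b := A 0 1 in let c := A 1 0 in let e := A 1 1 in
  \matrix_(i < 3, j < 3)
    match nat_of_ord i, nat_of_ord j with
    | 0, 0 => 2 * a | 0, 1 => b
    | 1, 0 => 2 * c | 1, 1 => a + e | 1, 2 => 2 * b
    | 2, 1 => c | 2, 2 => 2 * e
    | _, _ => 0
    end.

(* Elements of sym^2 M (char 0) are the symmetric tensors
   F = sum_{i,j} T i j e_i (x) e_j with T^T = T; the induced derivation is
   partial F = map_mx d T + A T + T A^T. *)
Definition sym2_der (K : fieldType) (d : K -> K) (n : nat) (A T : 'M[K]_n) : 'M[K]_n :=
  map_mx d T + A *m T + T *m A^T.

(* The symmetric bilinear form on M^* defined by F: for a, b in M^*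
   (row vectors of values on the basis), (a,b) = F(a (x) b) = a T b^T. *)
Definition sym2_form (K : fieldType) (n : nat) (T : 'M[K]_n) (a b : 'rV[K]_n) : 'M[K]_1 :=
  a *m T *m b^T.

Definition sym2_nondegenerate (K : fieldType) (n : nat) (T : 'M[K]_n) : Prop :=
  forall a : 'rV[K]_n, (forall b : 'rV[K]_n, sym2_form T a b = 0) -> a = 0.

Definition sym2_isotropic (K : fieldType) (n : nat) (T : 'M[K]_n) (a : 'rV[K]_n) : Prop :=
  a != 0 /\ sym2_form T a a = 0.

From mathcomp Require Import all_boot all_order all_algebra.
From mathcomp Require Import perm ssrAC ring.
Set Implicit Arguments. Unset Strict Implicit. Unset Printing Implicit Defensive.
Import GRing.Theory.
Local Open Scope ring_scope.

(** A non-degenerate ternary quadratic form with an isotropic vector is a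
   scalar multiple of the discriminant form 2(xz - y^2) of binary quadratic
   forms, and the scalar may be changed by any nonzero square.  Using the square
   of a trivialisation p of det M, the scalar becomes 2 / (p^2 det T), which is
   horizontal because Jacobi's formula gives d(det T) = -2 tr(A) det T for a
   horizontal T.  In the adapted basis the matrix of the derivation of M then
   preserves the discriminant form, i.e. lies in its orthogonal Lie algebra,
   which is the image of the traceless 2x2 matrices under sym^2; that traceless
   matrix defines N. *)

Lemma big_ord3 (V : nmodType) (F : 'I_3 -> V) : \sum_(i < 3) F i = F 0 + F 1 + F 2.
Proof. by rewrite !big_ord_recr big_ord0 /= add0r; congr (F _ + F _ + F _); apply: val_inj. Qed.

Lemma big_ord2 (V : nmodType) (F : 'I_2 -> V) : \sum_(i < 2) F i = F 0 + F 1.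
Proof. by rewrite !big_ord_recr big_ord0 /= add0r; congr (F _ + F _); apply: val_inj. Qed.

Lemma ord3_ind (P : 'I_3 -> Prop) : P 0 -> P 1 -> P 2 -> forall i, P i.
Proof.
move=> P0 P1 P2 [[|[|[|i]]] lti] //.
- by rewrite (_ : Ordinal lti = 0) //; apply: val_inj.
- by rewrite (_ : Ordinal lti = 1) //; apply: val_inj.
- by rewrite (_ : Ordinal lti = 2) //; apply: val_inj.
Qed.

Lemma det3 (K : comPzRingType) (X : 'M[K]_3) : \det X =
  X 0 0 * (X 1 1 * X 2 2 - X 1 2 * X 2 1)
  - X 0 1 * (X 1 0 * X 2 2 - X 1 2 * X 2 0)
  + X 0 2 * (X 1 0 * X 2 1 - X 1 1 * X 2 0).
Proof.
rewrite (expand_det_row _ 0) big_ord3 /cofactor !(expand_det_row _ 0) !big_ord2.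
rewrite /cofactor !det_mx11 !mxE /=.
(* Turn the lifted ordinals of the expansion into numerals, so that [ring]
   identifies equal entries. *)
pose Y (m n : nat) := X (inord m) (inord n).
have XY i j : X i j = Y i j by rewrite /Y !inord_val.
rewrite !XY; clearbody Y.
repeat match goal with |- context[Y ?m ?n] =>
  let m' := eval vm_compute in m in let n' := eval vm_compute in n in
  progress change (Y m n) with (Y m' n') end.
by rewrite /= !expr0 ?expr1 ?expr2; ring.
Qed.

Section QuadraticForms.

Variable K : fieldType.

(* The tensor f0 f2 + f2 f0 - 2 f1 f1 in the basis of [sym2mx]; as a form on
   the dual it is 2(xz - y^2). *)
Definition discrmx : 'M[K]_3 := \matrix_(i < 3, j < 3)
  match nat_of_ord i, nat_of_ord j with 0, 2 | 2, 0 => 1 | 1, 1 => -2 | _, _ => 0 end.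

Lemma det_discrmx : \det discrmx = 2.
Proof. by rewrite det3 !mxE /=; ring. Qed.

Lemma discrmx_skew_sym2mx (X : 'M[K]_3) : 2 != 0 :> K ->
  X *m discrmx + discrmx *m X^T = 0 -> exists2 B : 'M[K]_2, \tr B = 0 & X = sym2mx B.
Proof.
move=> two_neq0 skewX.
have eqX i j : 0 = (X *m discrmx + discrmx *m X^T) i j by rewrite skewX mxE.
have eq2_0 (x : K) : 2 * x = 0 -> x = 0 by move/eqP; rewrite mulf_eq0 (negbTE two_neq0) => /eqP.
have X02 : X 0 2 = 0 by apply/eq2_0; rewrite (eqX 0 0) !mxE !big_ord3 !mxE /=; ring.
have X20 : X 2 0 = 0 by apply/eq2_0; rewrite (eqX 2 2) !mxE !big_ord3 !mxE /=; ring.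
have X11 : X 1 1 = 0.
  by apply/eq2_0/eq2_0; rewrite -oppr0 (eqX 1 1) !mxE !big_ord3 !mxE /=; ring.
have X12 : X 1 2 = 2 * X 0 1 by apply/subr0_eq; rewrite (eqX 0 1) !mxE !big_ord3 !mxE /=; ring.
have X22 : X 2 2 = - X 0 0 by apply/subr0_eq; rewrite (eqX 0 2) !mxE !big_ord3 !mxE /=; ring.
have X10 : X 1 0 = 2 * X 2 1 by apply/subr0_eq; rewrite (eqX 1 2) !mxE !big_ord3 !mxE /=; ring.
pose B : 'M[K]_2 := \matrix_(i < 2, j < 2)
  match nat_of_ord i, nat_of_ord j with
  | 0, 0 => X 0 0 / 2 | 0, _ => X 0 1 | _, 0 => X 2 1 | _, _ => - (X 0 0 / 2) end.
exists B; first by rewrite /mxtrace big_ord2 !mxE /= subrr.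
apply/matrixP; elim/ord3_ind; elim/ord3_ind;
  by rewrite !mxE /= ?X02 ?X20 ?X11 ?X12 ?X22 ?X10 //; field.
Qed.

Lemma form_sym n (T : 'M[K]_n) : T^T = T ->
  forall u v : 'rV[K]_n, (v *m T *m u^T) 0 0 = (u *m T *m v^T) 0 0.
Proof. by move=> symT u v; rewrite -{1}symT -{1}(trmxK v) -!trmx_mul mulmxA mxE. Qed.

Lemma formZBr n (T : 'M[K]_n) (u v w : 'rV[K]_n) x y :
  (u *m T *m (x *: v - y *: w)^T) 0 0 = x * (u *m T *m v^T) 0 0 - y * (u *m T *m w^T) 0 0.
Proof.
have -> : (x *: v - y *: w)^T = x *: v^T - y *: w^T by apply/matrixP => i j; rewrite !mxE.
by rewrite mulmxBr -!scalemxAr !mxE.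
Qed.

Lemma formZBl n (T : 'M[K]_n) (u v w : 'rV[K]_n) x y :
  ((x *: v - y *: w) *m T *m u^T) 0 0 = x * (v *m T *m u^T) 0 0 - y * (w *m T *m u^T) 0 0.
Proof. by rewrite !mulmxBl -!scalemxAl !mxE. Qed.

Lemma nondegenerate_det n (T : 'M[K]_n) : sym2_nondegenerate T -> \det T != 0.
Proof.
move=> ndT; apply/negP => /det0P [v v_neq0 vT0]; move/negP: v_neq0; apply; apply/eqP.
by apply: ndT => b; rewrite /sym2_form vT0 mul0mx.
Qed.

Lemma isotropic_partner n (T : 'M[K]_n) (a : 'rV[K]_n) l : 2 != 0 :> K -> T^T = T ->
  sym2_nondegenerate T -> sym2_isotropic T a ->
  exists b : 'rV[K]_n, (a *m T *m b^T) 0 0 = l /\ (b *m T *m b^T) 0 0 = 0.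
Proof.
move=> two_neq0 symT ndT [a_neq0 aa0].
have {}aa0 : (a *m T *m a^T) 0 0 = 0 by rewrite -[LHS]/(sym2_form T a a 0 0) aa0 mxE.
have [b0 ab0] : exists b0 : 'rV[K]_n, (a *m T *m b0^T) 0 0 != 0.
  have [/existsP [j aTj] | aT0] := boolP [exists j, (a *m T) 0 j != 0].
    by exists (delta_mx 0 j); rewrite trmx_delta -colE mxE.
  case/negP: a_neq0; apply/eqP/ndT => b; rewrite /sym2_form.
  suff -> : a *m T = 0 by rewrite !mul0mx.
  apply/matrixP => i j; rewrite ord1 [RHS]mxE; apply/eqP.
  by move: aT0; rewrite negb_exists => /forallP /(_ j); rewrite negbK.
pose e : K := (a *m T *m b0^T) 0 0.
pose k := (b0 *m T *m b0^T) 0 0 / (2 * e).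
exists ((l / e) *: b0 - (l / e * k) *: a); split.
  by rewrite formZBr aa0 -/e; field.
rewrite formZBr !formZBl aa0 (form_sym symT a b0) -/e.
by rewrite /k; field; rewrite two_neq0 andbT.
Qed.

Definition cross3 (u v : 'rV[K]_3) : 'rV[K]_3 := \row_(j < 3)
  match nat_of_ord j with
  | 0 => u 0 1 * v 0 2 - u 0 2 * v 0 1
  | 1 => u 0 2 * v 0 0 - u 0 0 * v 0 2
  | _ => u 0 0 * v 0 1 - u 0 1 * v 0 0
  end.

Lemma dot_cross3l (u v : 'rV[K]_3) : (u *m (cross3 u v)^T) 0 0 = 0.
Proof. by do ![rewrite mxE /= | rewrite big_ord3 /=]; ring. Qed.

Lemma dot_cross3r (u v : 'rV[K]_3) : (v *m (cross3 u v)^T) 0 0 = 0.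
Proof. by do ![rewrite mxE /= | rewrite big_ord3 /=]; ring. Qed.

Lemma form_cross3 (T : 'M[K]_3) (u v : 'rV[K]_3) : T^T = T ->
  let c := cross3 (u *m T) (v *m T) in
  (c *m T *m c^T) 0 0 = \det T *
    ((u *m T *m u^T) 0 0 * (v *m T *m v^T) 0 0 - (u *m T *m v^T) 0 0 ^+ 2).
Proof.
move=> symT c; have Tji i j : T j i = T i j by rewrite -{1}symT mxE.
rewrite det3 /c; do ![rewrite mxE /= | rewrite big_ord3 /=].
by rewrite (Tji 0 1) (Tji 0 2) (Tji 1 2); ring.
Qed.

Lemma gram_entry m n (W : 'M[K]_(m, n)) (T : 'M[K]_n) i j :
  (W *m T *m W^T) i j = (row i W *m T *m (row j W)^T) 0 0.
Proof. by rewrite -row_mul !mxE; apply: eq_bigr => k _; rewrite !mxE. Qed.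

Lemma sym2_normal_form (T : 'M[K]_3) (a : 'rV[K]_3) : 2 != 0 :> K -> T^T = T ->
  sym2_nondegenerate T -> sym2_isotropic T a ->
  exists2 P : 'M[K]_3, P \in unitmx & exists2 l : K, l != 0 & T = l *: (P *m discrmx *m P^T).
Proof.
move=> two_neq0 symT ndT isoa.
have detT_neq0 := nondegenerate_det ndT.
(* For this l the Gram matrix of the rows a, c, b below is l *: discrmx. *)
pose l := 2 / \det T.
have l_neq0 : l != 0 by rewrite mulf_neq0 ?invr_neq0.
have [b [ab bb]] := isotropic_partner l two_neq0 symT ndT isoa.
have aa : (a *m T *m a^T) 0 0 = 0 by case: isoa => _; rewrite /sym2_form => ->; rewrite mxE.
pose c := cross3 (a *m T) (b *m T).
have ac : (a *m T *m c^T) 0 0 = 0 by exact: dot_cross3l.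
have bc : (b *m T *m c^T) 0 0 = 0 by exact: dot_cross3r.
have cc : (c *m T *m c^T) 0 0 = l * - 2.
  by rewrite form_cross3 // aa bb ab /l; field.
pose W : 'M[K]_3 := \matrix_(i < 3) [:: a; c; b]`_i.
have WTW : W *m T *m W^T = l *: discrmx.
  apply/matrixP; elim/ord3_ind; elim/ord3_ind;
  rewrite gram_entry !rowK [RHS]mxE [discrmx _ _]mxE /= ?mulr0 ?mulr1;
  by rewrite ?(form_sym symT a b) ?(form_sym symT a c) ?(form_sym symT b c).
have detW : \det W ^+ 2 * \det T = 2 * l ^+ 3.
  have := congr1 determinant WTW; rewrite !det_mulmx det_tr detZ det_discrmx => dWTW.
  by rewrite [RHS]mulrC -dWTW; ring.
have Wu : W \in unitmx.
  rewrite unitmxE unitfE; apply/eqP => detW0; move: detW; rewrite detW0 expr0n mul0r.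
  by move/esym/eqP; rewrite mulf_eq0 expf_eq0 (negbTE two_neq0) (negbTE l_neq0) andbF.
exists (invmx W); first by rewrite unitmx_inv.
exists l => //; rewrite scalemxAl scalemxAr -WTW !mulmxA mulVmx // mul1mx.
by rewrite -mulmxA -trmx_mul mulVmx // trmx1 mulmx1.
Qed.

Lemma sym2_normal_form_rescale (T P : 'M[K]_3) l p : 2 != 0 :> K ->
  P \in unitmx -> l != 0 -> p != 0 ->
  T = l *: (P *m discrmx *m P^T) ->
  exists2 Q : 'M[K]_3, Q \in unitmx & T = (2 / (p ^+ 2 * \det T)) *: (Q *m discrmx *m Q^T).
Proof.
move=> two_neq0 Pu l_neq0 p_neq0 TE.
have detP_neq0 : \det P != 0 by rewrite -unitfE -unitmxE.
have detT : \det T = 2 * l ^+ 3 * \det P ^+ 2.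
  by rewrite TE detZ !det_mulmx det_tr det_discrmx; ring.
(* s ^+ 2 = l * p ^+ 2 * \det T / 2 *)
pose s := l ^+ 2 * p * \det P.
exists (s *: P); first by rewrite unitmxZ // unitfE /s !mulf_neq0 ?expf_neq0.
have -> : (s *: P)^T = s *: P^T by apply/matrixP => i j; rewrite !mxE.
rewrite {1}TE -!scalemxAl -scalemxAr !scalerA; congr (_ *: _).
by rewrite detT /s; field; rewrite detP_neq0 l_neq0 two_neq0 p_neq0.
Qed.

End QuadraticForms.

Arguments discrmx {K}.

Section DifferentialModules.

Variables (K : fieldType) (d : K -> K).
Hypothesis hd : derivation d.

Lemma derivationD x y : d (x + y) = d x + d y. Proof. exact: hd.1. Qed.

Lemma derivationM x y : d (x * y) = d x * y + x * d y. Proof. exact: hd.2. Qed.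

Lemma derivation0 : d 0 = 0.
Proof. by apply: (addrI (d 0)); rewrite -derivationD !addr0. Qed.

Lemma derivationN x : d (- x) = - d x.
Proof. by apply/eqP; rewrite -addr_eq0 -derivationD addNr derivation0. Qed.

Lemma derivation1 : d 1 = 0.
Proof.
have := derivationM 1 1; rewrite !mul1r mulr1 => h.
by apply: (addrI (d 1)); rewrite -h addr0.
Qed.

Lemma derivation_nat n : d n%:R = 0.
Proof.
elim: n => [|n IH]; first exact: derivation0.
by rewrite -addn1 natrD derivationD IH derivation1 addr0.
Qed.

Lemma derivation_sign n : d ((-1) ^+ n) = 0.
Proof.
elim: n => [|n IH]; first exact: derivation1.
by rewrite exprS derivationM IH mulr0 derivationN derivation1 oppr0 mul0r addr0.
Qed.

Lemma derivationV_const x : d x = 0 -> d x^-1 = 0.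
Proof.
move=> dx0; have [->|nx0] := eqVneq x 0; first by rewrite invr0 derivation0.
have := derivationM x x^-1; rewrite mulfV // derivation1 dx0 mul0r add0r => /esym/eqP.
by rewrite mulf_eq0 (negbTE nx0) => /eqP.
Qed.

Lemma derivation_sum I r (P : pred I) (F : I -> K) :
  d (\sum_(i <- r | P i) F i) = \sum_(i <- r | P i) d (F i).
Proof. exact: (big_morph d derivationD derivation0). Qed.

Lemma derivation_prod_seq (I : eqType) (r : seq I) (F : I -> K) : uniq r ->
  d (\prod_(i <- r) F i) = \sum_(i <- r) d (F i) * \prod_(j <- r | j != i) F j.
Proof.
elim: r => [|x r IH] /=; first by rewrite big_nil big_nil derivation1.
case/andP=> xr ur; rewrite !big_cons derivationM IH // eqxx /= mulr_sumr.
congr (_ * _ + _).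
  rewrite big_seq_cond [RHS]big_seq_cond; apply: eq_bigl => j.
  by case: eqP => // ->; rewrite (negbTE xr).
apply: eq_big_seq => i ri.
by rewrite big_cons; case: eqP => [xi|_]; [rewrite xi ri in xr | rewrite mulrCA].
Qed.

Lemma derivation_prod (I : finType) (F : I -> K) :
  d (\prod_i F i) = \sum_i d (F i) * \prod_(j | j != i) F j.
Proof. exact: derivation_prod_seq (index_enum_uniq I). Qed.

Lemma derivation_det n (X : 'M[K]_n) : d (\det X) = \tr (\adj X *m map_mx d X).
Proof.
rewrite mxtrace_mulC /mxtrace /determinant derivation_sum.
have -> : \sum_i (map_mx d X *m \adj X) i i =
    \sum_i \sum_(s : 'S_n) d (X i (s i)) * ((-1) ^+ s * \prod_(k | i != k) X k (s k)).
  apply: eq_bigr => i _; rewrite mxE (partition_big (fun s : 'S_n => s i) predT) //=.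
  apply: eq_bigr => j _; rewrite !mxE expand_cofactor mulr_sumr.
  by apply: eq_bigr => s /eqP <-.
rewrite exchange_big /=; apply: eq_bigr => s _.
rewrite derivationM derivation_sign mul0r add0r derivation_prod mulr_sumr.
by apply: eq_bigr => i _; rewrite mulrCA; congr (_ * (_ * _)); apply: eq_bigl => k; rewrite eq_sym.
Qed.

Lemma derivation_mulmx m n p (X : 'M[K]_(m, n)) (Y : 'M[K]_(n, p)) :
  map_mx d (X *m Y) = map_mx d X *m Y + X *m map_mx d Y.
Proof.
apply/matrixP => i j; rewrite !mxE derivation_sum -big_split /=.
by apply: eq_bigr => k _; rewrite derivationM !mxE.
Qed.

Lemma derivation_scalemx m n a (X : 'M[K]_(m, n)) :
  d a = 0 -> map_mx d (a *: X) = a *: map_mx d X.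
Proof. by move=> da0; apply/matrixP => i j; rewrite !mxE derivationM da0 mul0r add0r. Qed.

Lemma derivation_det_flat n (A T : 'M[K]_n) :
  sym2_der d A T = 0 -> d (\det T) = - (\tr A *+ 2) * \det T.
Proof.
move=> /eqP; rewrite /sym2_der -addrA addr_eq0 => /eqP dT.
rewrite derivation_det dT mulmxN raddfN /= mulmxDr mxtraceD mulmxA mxtrace_mulC.
rewrite !mulmxA mul_mx_adj mul_adj_mx !mul_scalar_mx !mxtraceZ mxtrace_tr.
by rewrite -mulr2n mulNr mulrC mulrnAl.
Qed.

(* The matrix of the derivation in the basis formed by the columns of [P]. *)
Definition gauge n (A P : 'M[K]_n) : 'M[K]_n := invmx P *m (A *m P + map_mx d P).

Lemma gauge_iso n (A P : 'M[K]_n) : P \in unitmx -> dmod_iso d (gauge A P) A.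
Proof. by move=> Pu; exists P; split=> //; rewrite /gauge mulKVmx // addrC addKr. Qed.

Lemma sym2_der_gauge n (A P S : 'M[K]_n) : P \in unitmx ->
  sym2_der d A (P *m S *m P^T) = P *m sym2_der d (gauge A P) S *m P^T.
Proof.
move=> Pu; have PG : P *m gauge A P = A *m P + map_mx d P by rewrite /gauge mulKVmx.
have PGS : P *m (gauge A P *m S) = (A *m P + map_mx d P) *m S by rewrite mulmxA PG.
have PSG : P *m (S *m (gauge A P)^T) *m P^T = P *m S *m (A *m P + map_mx d P)^T.
  by rewrite -PG [(P *m _)^T]trmx_mul !mulmxA.
rewrite /sym2_der !mulmxDr !mulmxDl PGS PSG !derivation_mulmx -map_trmx.
rewrite linearD /= trmx_mul !mulmxDr !mulmxDl !mulmxA.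
by rewrite (ACl ((2*(4*1))*(5*3))%AC).
Qed.

Lemma sym2_derZ n (A X : 'M[K]_n) k : d k = 0 ->
  sym2_der d A (k *: X) = k *: sym2_der d A X.
Proof.
by move=> dk0; rewrite /sym2_der derivation_scalemx // -scalemxAr -scalemxAl !scalerDr.
Qed.

Lemma discrmx_const : map_mx d discrmx = 0.
Proof.
apply/matrixP => i j; rewrite !mxE.
case: (nat_of_ord i) (nat_of_ord j) => [|[|[|?]]] [|[|[|?]]];
  by rewrite ?derivation0 ?derivation1 ?derivationN ?derivation_nat ?oppr0.
Qed.

Lemma gauge_skew n (A Q S : 'M[K]_n) k : Q \in unitmx -> k != 0 -> d k = 0 ->
  map_mx d S = 0 -> sym2_der d A (k *: (Q *m S *m Q^T)) = 0 ->
  gauge A Q *m S + S *m (gauge A Q)^T = 0.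
Proof.
move=> Qu k_neq0 dk0 dS0; rewrite sym2_derZ // sym2_der_gauge //.
move/eqP; rewrite scaler_eq0 (negbTE k_neq0) /= => /eqP flat.
have := congr1 (fun M => invmx Q *m M *m invmx Q^T) flat.
rewrite mulmxA mulmxK ?unitmx_tr // mulKmx // mulmx0 mul0mx.
by rewrite /sym2_der dS0 add0r.
Qed.

Lemma detmx_trivial_section n (A : 'M[K]_n) : dmod_iso d (detmx A) (trivmx K) ->
  exists2 p : K, p != 0 & d p = p * \tr A.
Proof.
case=> P [Pu dP]; exists (P 0 0); first by move: Pu; rewrite unitmxE det_mx11 unitfE.
have := congr1 (fun M : 'M[K]_1 => M 0 0) dP.
by rewrite /trivmx mul0mx subr0 /detmx mul_mx_scalar !mxE => ->; rewrite mulrC.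
Qed.

Lemma flat_det_ratio_const n (A T : 'M[K]_n) p : sym2_der d A T = 0 -> d p = p * \tr A ->
  d (2 / (p ^+ 2 * \det T)) = 0.
Proof.
move=> flatT dp; apply/eqP; rewrite derivationM derivation_nat mul0r add0r mulf_eq0.
apply/orP; right; apply/eqP/derivationV_const.
rewrite derivationM expr2 derivationM dp (derivation_det_flat flatT); ring.
Qed.

Lemma traceless_det_trivial (B : 'M[K]_2) : \tr B = 0 -> dmod_iso d (detmx B) (trivmx K).
Proof.
move=> trB; exists 1%:M; split; first exact: unitmx1.
rewrite /trivmx mul0mx subr0 /detmx mul1mx trB; apply/matrixP => i j.
by rewrite !mxE; case: (i == j); rewrite ?mulr1n ?mulr0n ?derivation0 ?derivation1.
Qed.

End DifferentialModules.

Theorem theorem2p1 (K : fieldType) (d : K -> K) (hd : derivation d)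
  (hchar : [pchar K] =i pred0) (A : 'M[K]_3)
  (hdetM : dmod_iso d (detmx A) (trivmx K)) :
  (exists T : 'M[K]_3,
      trmx T = T /\ sym2_der d A T = 0 /\ sym2_nondegenerate T /\
      exists a : 'rV[K]_3, sym2_isotropic T a) ->
  exists B : 'M[K]_2,
    dmod_iso d (detmx B) (trivmx K) /\ dmod_iso d (sym2mx B) A.
Proof.
move=> [T [symT [flatT [ndT [a isoa]]]]].
have two_neq0 : 2 != 0 :> K by have := hchar 2; rewrite !inE => /negbT.
have [p p_neq0 dp] := detmx_trivial_section hdetM.
have [P Pu [l l_neq0 TE]] := sym2_normal_form two_neq0 symT ndT isoa.
have [Q Qu TQ] := sym2_normal_form_rescale two_neq0 Pu l_neq0 p_neq0 TE.
have k_neq0 : 2 / (p ^+ 2 * \det T) != 0.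
  by rewrite mulf_neq0 ?invr_neq0 ?mulf_neq0 ?expf_neq0 ?nondegenerate_det.
have dk0 := flat_det_ratio_const hd flatT dp.
rewrite TQ in flatT; have skewG := gauge_skew hd Qu k_neq0 dk0 (discrmx_const hd) flatT.
have [B trB GB] := discrmx_skew_sym2mx two_neq0 skewG.
exists B; split; first exact: traceless_det_trivial.
by rewrite -GB; exact: gauge_iso.
Qed.
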